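(* Let $(A,\cdot)$ be an alternative algebra and $(V,\cdot_V,\mathfrak{l},\mathfrak{r})$ an $A$-bimodule alternative algebra. Let $[x,y]=x\cdot y-y\cdot x$ on $A$ and $[a,b]_V=a\cdot_V b-b\cdot_V a$ on $V$. Then $(V;[\cdot,\cdot]_V,\mathfrak{l}-\mathfrak{r})$ is an $A$-module Malcev algebra of the Malcev algebra $(A,[\cdot,\cdot])$.
   Context: Field of characteristic zero. An alternative algebra is a vector space with bilinear product whose associator $as(x,y,z)=(xy)z-x(yz)$ satisfies $as(x,x,y)=as(y,x,x)=0$; its commutator bracket makes it a Malcev algebra. A representation of $(A,\cdot)$ is $(V,\mathfrak{l},\mathfrak{r})$ with: $\mathfrak{r}(x)\mathfrak{r}(y)+\mathfrak{r}(y)\mathfrak{r}(x)-\mathfrak{r}(x\cdot y)-\mathfrak{r}(y\cdot x)=0$; $\mathfrak{l}(x\cdot y)+\mathfrak{l}(y\cdot x)-\mathfrak{l}(x)\mathfrak{l}(y)-\mathfrak{l}(y)\mathfrak{l}(x)=0$; $\mathfrak{l}(x\cdot y)+\mathfrak{r}(y)\mathfrak{l}(x)-\mathfrak{l}(x)\mathfrak{l}(y)-\mathfrak{l}(x)\mathfrak{r}(y)=0$; $\mathfrak{r}(y)\mathfrak{l}(x)+\mathfrak{r}(y)\mathfrak{r}(x)-\mathfrak{l}(x)\mathfrak{r}(y)-\mathfrak{r}(x\cdot y)=0$. An $A$-bimodule alternative algebra is $(V,\cdot_V,\mathfrak{l},\mathfrak{r})$ with $(V,\cdot_V)$ alternative,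 $(V,\mathfrak{l},\mathfrak{r})$ a representation, and for $x\in A$, $a,b\in V$: $\mathfrak{r}(x)(a\cdot_V b)-a\cdot_V(\mathfrak{r}(x)b)+\mathfrak{r}(x)(b\cdot_V a)-b\cdot_V(\mathfrak{r}(x)a)=0$; $(\mathfrak{l}(x)a)\cdot_V b-\mathfrak{l}(x)(a\cdot_V b)+(\mathfrak{l}(x)b)\cdot_V a-\mathfrak{l}(x)(b\cdot_V a)=0$; $(\mathfrak{l}(x)a)\cdot_V b-a\cdot_V(\mathfrak{l}(x)b)+(\mathfrak{r}(x)a)\cdot_V b-\mathfrak{l}(x)(a\cdot_V b)=0$; $(\mathfrak{r}(x)a)\cdot_V b-a\cdot_V(\mathfrak{l}(x)b)+\mathfrak{r}(x)(a\cdot_V b)-a\cdot_V(\mathfrak{r}(x)b)=0$. For a Malcev algebra $(A,[\cdot,\cdot])$ (anti-symmetric bracket with $J(x,y,[x,z])=[J(x,y,z),x]$, $J$ the Jacobian), a representation is $\rho:A\to\mathrm{End}(V)$ with $\rho([[x,y],z])=\rho(x)\rho(y)\rho(z)-\rho(z)\rho(x)\rho(y)+\rho(y)\rho([z,x])-\rho([y,z])\rho(x)$, and an $A$-module Malcev algebra $(V;[\cdot,\cdot]_V,\rho)$ is a Malcev algebra $(V,[\cdot,\cdot]_V)$ with a representation $\rho$ such that for $x,y\in A$, $a,b,c\in V$: $\rho([x,y])[a,b]_V=\rho(x)[\rho(y)a,b]_V-[\rho(y)\rho(x)a,b]_V-[\rho(x)\rho(y)b,a]_V+\rho(y)[\rho(x)b,a]_V$;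 $[\rho(x)a,\rho(y)b]_V=[\rho([x,y])a,b]_V-\rho(x)[\rho(y)a,b]_V+\rho(y)\rho(x)[a,b]_V+[\rho(y)\rho(x)b,a]_V$; $[\rho(x)a,[b,c]_V]_V=[[\rho(x)b,a]_V,c]_V-\rho(x)[[b,a]_V,c]_V-[\rho(x)[a,c]_V,b]_V-[[\rho(x)c,b]_V,a]_V$. *)

From HB Require Import structures.
From mathcomp Require Import all_boot all_algebra.
Set Implicit Arguments. Unset Strict Implicit. Unset Printing Implicit Defensive.
Import GRing.Theory.
Local Open Scope ring_scope.

Definition bilin (F : fieldType) (U V W : lmodType F) (f : U -> V -> W) : Prop :=
  (forall (a : F) x1 x2 y, f (a *: x1 + x2) y = a *: f x1 y + f x2 y) /\
  (forall (a : F) x y1 y2, f x (a *: y1 + y2) = a *: f x y1 + f x y2).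

Definition assoc (F : fieldType) (A : lmodType F) (m : A -> A -> A) (x y z : A) : A :=
  m (m x y) z - m x (m y z).

Definition alternative (F : fieldType) (A : lmodType F) (m : A -> A -> A) : Prop :=
  bilin m /\ (forall x y, assoc m x x y = 0) /\ (forall x y, assoc m y x x = 0).

(* representation (V, l, r) of the alternative algebra (A, m);
   l x, r x : End(V), identities stated pointwise on V *)
Definition alt_rep (F : fieldType) (A V : lmodType F) (m : A -> A -> A)
  (l r : A -> V -> V) : Prop :=
  bilin l /\ bilin r /\
  (forall x y v, r x (r y v) + r y (r x v) - r (m x y) v - r (m y x) v = 0) /\
  (forall x y v, l (m x y) v + l (m y x) v - l x (l y v) - l y (l x v) = 0) /\
  (forall x y v, l (m x y) v + r y (l x v) - l x (l y v) - l x (r y v) = 0) /\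
  (forall x y v, r y (l x v) + r y (r x v) - l x (r y v) - r (m x y) v = 0).

Definition bimodule_alternative (F : fieldType) (A V : lmodType F) (m : A -> A -> A)
  (mV : V -> V -> V) (l r : A -> V -> V) : Prop :=
  alternative mV /\ alt_rep m l r /\
  (forall x a b, r x (mV a b) - mV a (r x b) + r x (mV b a) - mV b (r x a) = 0) /\
  (forall x a b, mV (l x a) b - l x (mV a b) + mV (l x b) a - l x (mV b a) = 0) /\
  (forall x a b, mV (l x a) b - mV a (l x b) + mV (r x a) b - l x (mV a b) = 0) /\
  (forall x a b, mV (r x a) b - mV a (l x b) + r x (mV a b) - mV a (r x b) = 0).

Definition commutator (F : fieldType) (A : lmodType F) (m : A -> A -> A) (x y : A) : A :=
  m x y - m y x.

Definition jacobian (F : fieldType) (A : lmodType F) (br : A -> A -> A) (x y z : A) : A :=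
  br (br x y) z + br (br y z) x + br (br z x) y.

Definition malcev (F : fieldType) (A : lmodType F) (br : A -> A -> A) : Prop :=
  bilin br /\ (forall x y, br x y = - br y x) /\
  (forall x y z, jacobian br x y (br x z) = br (jacobian br x y z) x).

Definition malcev_rep (F : fieldType) (A V : lmodType F) (br : A -> A -> A)
  (rho : A -> V -> V) : Prop :=
  bilin rho /\
  (forall x y z v, rho (br (br x y) z) v =
     rho x (rho y (rho z v)) - rho z (rho x (rho y v))
     + rho y (rho (br z x) v) - rho (br y z) (rho x v)).

Definition module_malcev (F : fieldType) (A V : lmodType F) (br : A -> A -> A)
  (brV : V -> V -> V) (rho : A -> V -> V) : Prop :=
  malcev br /\ malcev brV /\ malcev_rep br rho /\
  (forall x y a b, rho (br x y) (brV a b) =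
     rho x (brV (rho y a) b) - brV (rho y (rho x a)) b
     - brV (rho x (rho y b)) a + rho y (brV (rho x b) a)) /\
  (forall x y a b, brV (rho x a) (rho y b) =
     brV (rho (br x y) a) b - rho x (brV (rho y a) b)
     + rho y (rho x (brV a b)) + brV (rho y (rho x b)) a) /\
  (forall x a b c, brV (rho x a) (brV b c) =
     brV (brV (rho x b) a) c - rho x (brV (brV b a) c)
     - brV (rho x (brV a c)) b - brV (brV (rho x c) b) a).

From HB Require Import structures.
From mathcomp Require Import all_boot all_algebra.
Set Implicit Arguments.
Unset Strict Implicit.
Unset Printing Implicit Defensive.
Import GRing.Theory.
Local Open Scope ring_scope.

(* The split null extension A ⋉ V, with product
   (x, a)(y, b) = (xy, l(x)b + r(y)a + ab), is an alternative algebra: this is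
   exactly what the representation and bimodule axioms say.  Its commutator
   restricts to [,] on A, to l - r between A and V, and to [,]_V on V, so every
   axiom of an A-module Malcev algebra is an instance, at elements of A and V, of
   an identity satisfied by the commutator of any alternative algebra.  These
   identities are multilinear and hold in the free nonassociative ring modulo the
   linearized alternative laws; each is proved by exhibiting an explicit integer
   combination of instances of those laws and letting the kernel check that
   both sides expand to the same integer combination of monomials.
   Characteristic 0 is needed only to halve the linearized Malcev identity. *)

Definition associator (D : zmodType) (mul : D -> D -> D) (a b c : D) : D :=
  mul (mul a b) c - mul a (mul b c).

Definition lin_alternative (D : zmodType) (mul : D -> D -> D) : Prop :=
  [/\ left_distributive mul +%R, right_distributive mul +%R,
      forall a b c, associator mul a b c + associator mul b a c = 0
    & forall a b c, associator mul a b c + associator mul a c b = 0].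

Lemma morph_add_mulrz (U W : zmodType) (f : U -> W) :
  {morph f : a b / a + b} -> forall a z, f (a *~ z) = f a *~ z.
Proof.
move=> fD; have f0 : f 0 = 0 by apply: (addrI (f 0)); rewrite -fD !addr0.
have fN a : f (- a) = - f a by apply: (addrI (f a)); rewrite -fD !subrr.
have fMn a n : f (a *+ n) = f a *+ n.
  by elim: n => [|n IHn]; rewrite ?f0 // !mulrS fD IHn.
by move=> a [n|n]; rewrite ?NegzE ?mulrNz ?fN -!pmulrn fMn.
Qed.

Declare Scope nterm_scope.

Inductive term := tVar of nat | tMul of term & term | tAdd of term & term
  | tOpp of term | tZscale of int & term | tZero.
Bind Scope nterm_scope with term.
Notation "a * b" := (tMul a b) : nterm_scope.

Inductive monomial := mVar of nat | mMul of monomial & monomial.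

Fixpoint monomial_eqb (u v : monomial) : bool :=
  match u, v with
  | mVar i, mVar j => i == j
  | mMul u1 u2, mMul v1 v2 => monomial_eqb u1 v1 && monomial_eqb u2 v2
  | _, _ => false
  end.

Lemma monomial_eqb_eq u v : monomial_eqb u v -> u = v.
Proof.
elim: u v => [i|u1 IH1 u2 IH2] [j|v1 v2] //=; first by move/eqP->.
by case/andP=> /IH1 -> /IH2 ->.
Qed.

Fixpoint poly_of_term (t : term) : seq (int * monomial) :=
  match t with
  | tVar i => [:: (1, mVar i)]
  | tMul a b =>
      [seq (p.1 * q.1, mMul p.2 q.2) | p <- poly_of_term a, q <- poly_of_term b]
  | tAdd a b => poly_of_term a ++ poly_of_term b
  | tOpp a => [seq (- p.1, p.2) | p <- poly_of_term a]
  | tZscale z a => [seq (z * p.1, p.2) | p <- poly_of_term a]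
  | tZero => [::]
  end.

Fixpoint add_monomial (c : int) (u : monomial) (p : seq (int * monomial)) :=
  match p with
  | [::] => [:: (c, u)]
  | q :: p' => if monomial_eqb u q.2 then (c + q.1, q.2) :: p'
               else q :: add_monomial c u p'
  end.

Definition collect (p : seq (int * monomial)) : seq (int * monomial) :=
  foldr (fun q acc => add_monomial q.1 q.2 acc) [::] p.

Definition poly_eq0 (p : seq (int * monomial)) : bool :=
  all (fun q => q.1 == 0) (collect p).

Inductive cert := AltL of term & term & term | AltR of term & term & term
  | MulL of term & cert | MulR of cert & term.

Definition associator_term (a b c : term) : term :=
  tAdd ((a * b) * c) (tOpp (a * (b * c))).

Fixpoint cert_term (c : cert) : term :=
  match c with
  | AltL a b c => tAdd (associator_term a b c) (associator_term b a c)
  | AltR a b c => tAdd (associator_term a b c) (associator_term a c b)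
  | MulL t c => t * cert_term c
  | MulR c t => cert_term c * t
  end.

Definition cert_comb (cs : seq (int * cert)) : term :=
  foldr (fun p t => tAdd (tZscale p.1 (cert_term p.2)) t) tZero cs.

Section Evaluation.
Variables (D : zmodType) (mul : D -> D -> D) (env : seq D).

Fixpoint eval_term (t : term) : D :=
  match t with
  | tVar i => nth 0 env i
  | tMul a b => mul (eval_term a) (eval_term b)
  | tAdd a b => eval_term a + eval_term b
  | tOpp a => - eval_term a
  | tZscale z a => eval_term a *~ z
  | tZero => 0
  end.

Fixpoint eval_monomial (u : monomial) : D :=
  match u with
  | mVar i => nth 0 env i
  | mMul u v => mul (eval_monomial u) (eval_monomial v)
  end.

Definition eval_poly (p : seq (int * monomial)) : D :=
  \sum_(q <- p) eval_monomial q.2 *~ q.1.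

Hypotheses (mulDl : left_distributive mul +%R) (mulDr : right_distributive mul +%R).

Lemma eval_poly_mul p q :
  eval_poly [seq (u.1 * v.1, mMul u.2 v.2) | u <- p, v <- q] =
  mul (eval_poly p) (eval_poly q).
Proof.
have mulzl b := morph_add_mulrz (f := mul^~ b) (fun a a' => mulDl a a' b).
have mulzr a := morph_add_mulrz (f := mul a) (mulDr a).
rewrite /eval_poly; elim: p => [|u p IHp] /=.
  by rewrite big_nil -(mulr0z 0) mulzl mulr0z.
rewrite big_cat IHp big_cons mulDl; congr (_ + _); clear IHp.
elim: q => [|v q IHq] /=; first by rewrite !big_nil -(mulr0z 0) !mulzr !mulr0z.
by rewrite !big_cons /= IHq mulDr !mulzl !mulzr mulrC mulrzA.
Qed.

Lemma eval_poly_of_term t : eval_poly (poly_of_term t) = eval_term t.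
Proof.
elim: t => [i|a IHa b IHb|a IHa b IHb|a IHa|z a IHa|] /=.
- by rewrite /eval_poly big_seq1.
- by rewrite eval_poly_mul IHa IHb.
- by rewrite /eval_poly big_cat -IHa -IHb.
- rewrite /eval_poly big_map -IHa -sumrN; apply: eq_bigr => q _.
  by rewrite mulrNz.
- rewrite /eval_poly big_map -IHa (big_morph _ (@mulrzDl _ z) (mul0rz _ z)).
  by apply: eq_bigr => q _; rewrite mulrC mulrzA.
- by rewrite /eval_poly big_nil.
Qed.

Lemma eval_add_monomial c u p :
  eval_poly (add_monomial c u p) = eval_monomial u *~ c + eval_poly p.
Proof.
rewrite /eval_poly; elim: p => [|q p IHp] /=.
  by rewrite big_seq1 big_nil addr0.
case: ifP => [/monomial_eqb_eq ->|_]; rewrite !big_cons /=.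
  by rewrite mulrzDr addrA.
by rewrite IHp addrCA.
Qed.

Lemma eval_collect p : eval_poly (collect p) = eval_poly p.
Proof.
elim: p => [|q p IHp] //=.
by rewrite eval_add_monomial IHp /eval_poly big_cons.
Qed.

Lemma poly_eq0_eval p : poly_eq0 p -> eval_poly p = 0.
Proof.
rewrite /poly_eq0 -eval_collect /eval_poly.
elim: (collect p) => [|q p' IHp] /=; first by rewrite big_nil.
by case/andP=> /eqP q0 /IHp; rewrite big_cons q0 mulr0z add0r.
Qed.

End Evaluation.

Section Certificates.
Variables (D : zmodType) (mul : D -> D -> D).
Hypothesis altD : lin_alternative mul.

Lemma eval_cert_term env c : eval_term mul env (cert_term c) = 0.
Proof.
have [mulDl mulDr altl altr] := altD.
have mul0l b : mul 0 b = 0 by apply: (addrI (mul 0 b)); rewrite -mulDl !addr0.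
have mul0r a : mul a 0 = 0 by apply: (addrI (mul a 0)); rewrite -mulDr !addr0.
by elim: c => [a b c|a b c|t c IHc|c IHc t] /=; rewrite ?IHc ?altl ?altr.
Qed.

Lemma eval_cert_comb env cs : eval_term mul env (cert_comb cs) = 0.
Proof.
by elim: cs => [|[z c] cs IHcs] //=; rewrite IHcs eval_cert_term mul0rz addr0.
Qed.

Lemma certified_identity env t cs :
  poly_eq0 (poly_of_term (tAdd t (tOpp (cert_comb cs)))) -> eval_term mul env t = 0.
Proof.
have [mulDl mulDr _ _] := altD.
move/(poly_eq0_eval mul env); rewrite (eval_poly_of_term env mulDl mulDr) /=.
by rewrite eval_cert_comb oppr0 addr0.
Qed.

End Certificates.

Lemma lin_alternative_zero (D : zmodType) : lin_alternative (fun _ _ : D => 0).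
Proof. by split=> a b c; rewrite /associator ?subrr ?addr0. Qed.

Ltac list_index x l :=
  lazymatch l with
  | ?y :: ?l' =>
      match goal with
      | _ => let _ := constr:(erefl x : x = y) in constr:(0%N)
      | _ => let n := list_index x l' in constr:(S n)
      end
  end.

Ltac list_snoc l x :=
  lazymatch l with
  | [::] => constr:([:: x])
  | ?y :: ?l' => let l'' := list_snoc l' x in constr:(y :: l'')
  end.

Ltac reify_atom e env :=
  match goal with
  | _ => let n := list_index e env in constr:((tVar n, env))
  | _ => let n := eval compute in (size env) in
         let env' := list_snoc env e in constr:((tVar n, env'))
  end.

Ltac reify mul e env :=
  lazymatch e with
  | ?a + ?b =>
      lazymatch reify mul a env with (?ta, ?env1) =>
      lazymatch reify mul b env1 with (?tb, ?env2) => constr:((tAdd ta tb, env2)) end end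
  | - ?a => lazymatch reify mul a env with (?ta, ?env1) => constr:((tOpp ta, env1)) end
  | 0 => constr:((tZero, env))
  | mul ?a ?b =>
      lazymatch reify mul a env with (?ta, ?env1) =>
      lazymatch reify mul b env1 with (?tb, ?env2) => constr:((tMul ta tb, env2)) end end
  | _ => reify_atom e env
  end.

(* [env] lists the variables of the goal in the order in which [cs] numbers them. *)
Ltac alt_identity altD env cs :=
  apply: subr0_eq;
  lazymatch type of altD with lin_alternative ?mul =>
  lazymatch goal with |- ?e = 0 =>
  lazymatch reify mul e env with (?t, ?env') =>
    exact (@certified_identity _ mul altD env' t cs ltac:(vm_compute; reflexivity))
  end end end.

Ltac abel :=
  apply: subr0_eq;
  lazymatch goal with |- ?e = 0 =>
  let T := type of e in
  lazymatch reify (fun _ _ : T => 0 : T) e (@nil T) with (?t, ?env) =>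
    exact (@certified_identity T _ (lin_alternative_zero T) env t [::]
             ltac:(vm_compute; reflexivity))
  end end.

Local Notation x0 := (tVar 0).
Local Notation x1 := (tVar 1).
Local Notation x2 := (tVar 2).
Local Notation x3 := (tVar 3).

(* Each list expresses one of the identities below as an integer combination
   of instances of the linearized alternative laws; it was found by
   solving the corresponding linear system. *)
Definition cert_malcev_lin : seq (int * cert) := [::
  (1, AltL (x0 * x1) x2 x3); (-5, MulR (AltL x0 x1 x2) x3);
  (-1, AltL (x0 * x1) x3 x2); (-1, MulR (AltL x0 x1 x3) x2);
  (-3, AltL (x0 * x2) x1 x3); (1, AltL x1 x3 (x0 * x2));
  (-7, MulR (AltL x0 x2 x1) x3); (-1, MulL x0 (AltL x2 x3 x1));
  (-11, MulR (AltL x0 x2 x3) x1); (-2, AltL (x0 * x3) x1 x2);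
  (-1, MulR (AltL x0 x3 x1) x2); (-5, AltL (x0 * x3) x2 x1);
  (-1, MulR (AltL x0 x3 x2) x1); (1, AltL (x1 * x0) x2 x3);
  (-1, AltL (x1 * x0) x3 x2); (-3, AltL (x1 * x2) x0 x3);
  (1, AltL x0 x3 (x1 * x2)); (-1, MulR (AltL x1 x2 x0) x3);
  (-1, MulL x1 (AltL x2 x3 x0)); (-5, MulR (AltL x1 x2 x3) x0);
  (-2, AltL (x1 * x3) x0 x2); (6, AltL x0 x2 (x1 * x3));
  (-1, MulR (AltL x1 x3 x0) x2); (-5, AltL (x1 * x3) x2 x0);
  (-1, MulR (AltL x1 x3 x2) x0); (1, AltL (x2 * x0) x1 x3);
  (7, MulL x2 (AltL x0 x1 x3)); (8, MulL x2 (AltL x0 x3 x1));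
  (-5, AltL (x2 * x1) x0 x3); (2, MulL x2 (AltL x1 x3 x0));
  (-8, AltL (x2 * x3) x0 x1); (3, AltL x0 x1 (x2 * x3));
  (1, MulR (AltL x2 x3 x0) x1); (-2, AltL (x2 * x3) x1 x0);
  (1, MulR (AltL x2 x3 x1) x0); (6, AltL (x3 * x0) x1 x2);
  (7, AltL x1 x2 (x3 * x0)); (-1, MulL x3 (AltL x0 x1 x2));
  (7, AltL (x3 * x0) x2 x1); (7, AltL x0 x2 (x3 * x1));
  (1, AltL (x3 * x1) x2 x0); (1, AltL x0 x1 (x3 * x2));
  (2, AltR (x0 * x1) x2 x3); (-8, AltR x2 (x0 * x1) x3);
  (-2, MulL x0 (AltR x1 x2 x3)); (2, MulR (AltR x0 x1 x2) x3);
  (8, AltR (x0 * x2) x1 x3); (-6, MulL x0 (AltR x2 x1 x3));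
  (2, MulR (AltR x0 x2 x3) x1); (4, AltR (x0 * x3) x1 x2);
  (2, AltR (x1 * x0) x2 x3); (-2, AltR x2 (x1 * x0) x3);
  (-2, MulL x1 (AltR x0 x2 x3)); (2, MulR (AltR x1 x0 x2) x3);
  (2, AltR (x1 * x2) x0 x3); (2, MulR (AltR x1 x2 x3) x0);
  (4, AltR (x1 * x3) x0 x2); (6, AltR (x2 * x0) x1 x3);
  (-14, MulL x2 (AltR x0 x1 x3)); (6, MulR (AltR x2 x0 x3) x1);
  (6, AltR (x2 * x1) x0 x3); (-8, MulL x2 (AltR x1 x0 x3));
  (-6, AltR (x3 * x0) x1 x2); (-6, AltR x1 (x3 * x0) x2)].

Definition cert_rep : seq (int * cert) := [::
  (2, AltL (x0 * x1) x2 x3); (1, MulL x0 (AltL x1 x2 x3));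
  (3, MulR (AltL x0 x1 x2) x3); (1, AltL (x0 * x1) x3 x2);
  (5, MulR (AltL x0 x1 x3) x2); (-3, AltL (x0 * x2) x1 x3);
  (-1, MulR (AltL x0 x2 x1) x3); (-1, AltL (x0 * x2) x3 x1);
  (-1, MulL x0 (AltL x2 x3 x1)); (-6, MulR (AltL x0 x2 x3) x1);
  (-1, AltL (x0 * x3) x1 x2); (2, AltL x1 x2 (x0 * x3));
  (1, MulR (AltL x0 x3 x1) x2); (-2, AltL (x0 * x3) x2 x1);
  (-2, MulR (AltL x0 x3 x2) x1); (1, AltL x2 x3 (x1 * x0));
  (-4, MulL x1 (AltL x0 x2 x3)); (-1, AltL (x1 * x0) x3 x2);
  (-3, MulL x1 (AltL x0 x3 x2)); (3, AltL (x1 * x2) x0 x3);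
  (-3, MulR (AltL x1 x2 x0) x3); (1, MulL x1 (AltL x2 x3 x0));
  (-4, MulR (AltL x1 x2 x3) x0); (2, AltL (x1 * x3) x0 x2);
  (1, AltL x0 x2 (x1 * x3)); (-1, MulR (AltL x1 x3 x0) x2);
  (-4, AltL (x1 * x3) x2 x0); (-3, AltL (x2 * x0) x1 x3);
  (4, MulL x2 (AltL x0 x1 x3)); (-1, AltL (x2 * x0) x3 x1);
  (4, MulL x2 (AltL x0 x3 x1)); (-1, AltL (x2 * x1) x0 x3);
  (1, AltL x0 x3 (x2 * x1)); (1, MulL x2 (AltL x1 x3 x0));
  (-4, AltL (x2 * x3) x0 x1); (-2, AltL x0 x1 (x2 * x3));
  (-1, AltL (x2 * x3) x1 x0); (1, AltL (x3 * x0) x1 x2);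
  (5, AltL x1 x2 (x3 * x0)); (4, AltL (x3 * x0) x2 x1);
  (-1, MulL x3 (AltL x0 x2 x1)); (3, AltL x0 x2 (x3 * x1));
  (-3, AltL x0 x1 (x3 * x2)); (1, AltL (x3 * x2) x1 x0);
  (-4, AltR (x0 * x1) x2 x3); (-4, AltR x2 (x0 * x1) x3);
  (2, MulL x0 (AltR x1 x2 x3)); (-2, MulR (AltR x0 x1 x3) x2);
  (4, AltR (x0 * x2) x1 x3); (4, AltR x1 (x0 * x2) x3);
  (-2, MulL x0 (AltR x2 x1 x3)); (2, MulR (AltR x0 x2 x3) x1);
  (2, AltR (x0 * x3) x1 x2); (4, AltR x1 (x0 * x3) x2);
  (-2, AltR (x1 * x0) x2 x3); (-2, AltR x2 (x1 * x0) x3);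
  (6, MulL x1 (AltR x0 x2 x3)); (-2, MulR (AltR x1 x0 x2) x3);
  (-2, MulR (AltR x1 x0 x3) x2); (2, AltR (x1 * x2) x0 x3);
  (-2, MulL x1 (AltR x2 x0 x3)); (2, MulR (AltR x1 x2 x3) x0);
  (2, AltR (x1 * x3) x0 x2); (4, AltR (x2 * x0) x1 x3);
  (-2, AltR x1 (x2 * x0) x3); (-6, MulL x2 (AltR x0 x1 x3));
  (4, MulR (AltR x2 x0 x3) x1); (4, AltR (x2 * x1) x0 x3);
  (-6, MulL x2 (AltR x1 x0 x3)); (-2, AltR (x3 * x0) x1 x2);
  (-4, AltR x1 (x3 * x0) x2)].

Definition cert_module1 : seq (int * cert) := [::
  (1, AltL (x0 * x1) x2 x3); (1, AltL x2 x3 (x0 * x1));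
  (-2, MulL x0 (AltL x1 x2 x3)); (-1, MulR (AltL x0 x1 x2) x3);
  (1, AltL (x0 * x1) x3 x2); (-3, MulR (AltL x0 x1 x3) x2);
  (-3, MulR (AltL x0 x2 x1) x3); (-2, AltL (x0 * x2) x3 x1);
  (-4, MulR (AltL x0 x2 x3) x1); (-5, AltL (x0 * x3) x1 x2);
  (-7, AltL x1 x2 (x0 * x3)); (1, MulR (AltL x0 x3 x1) x2);
  (-3, AltL (x0 * x3) x2 x1); (-2, MulR (AltL x0 x3 x2) x1);
  (5, AltL (x1 * x0) x2 x3); (2, MulL x1 (AltL x0 x2 x3));
  (1, AltL (x1 * x0) x3 x2); (4, MulL x1 (AltL x0 x3 x2));
  (-3, AltL (x1 * x2) x0 x3); (-1, AltL x0 x3 (x1 * x2));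
  (7, MulR (AltL x1 x2 x0) x3); (1, MulL x1 (AltL x2 x3 x0));
  (1, MulR (AltL x1 x2 x3) x0); (-2, AltL (x1 * x3) x0 x2);
  (4, AltL x0 x2 (x1 * x3)); (1, MulR (AltL x1 x3 x0) x2);
  (1, AltL (x1 * x3) x2 x0); (1, MulR (AltL x1 x3 x2) x0);
  (2, AltL (x2 * x0) x1 x3); (-1, AltL x1 x3 (x2 * x0));
  (3, MulL x2 (AltL x0 x1 x3)); (3, MulL x2 (AltL x0 x3 x1));
  (-5, AltL (x2 * x1) x0 x3); (1, AltL x0 x3 (x2 * x1));
  (-2, MulL x2 (AltL x1 x3 x0)); (-2, AltL (x2 * x3) x0 x1);
  (4, AltL x0 x1 (x2 * x3)); (1, AltL (x2 * x3) x1 x0);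
  (-1, MulR (AltL x2 x3 x1) x0); (1, AltL (x3 * x0) x1 x2);
  (-2, AltL x1 x2 (x3 * x0)); (1, MulL x3 (AltL x0 x1 x2));
  (3, AltL (x3 * x0) x2 x1); (-1, MulL x3 (AltL x0 x2 x1));
  (2, AltL x0 x2 (x3 * x1)); (-1, AltL (x3 * x1) x2 x0);
  (2, AltL x0 x1 (x3 * x2)); (1, AltL (x3 * x2) x1 x0);
  (2, AltR (x0 * x1) x2 x3); (-4, AltR x2 (x0 * x1) x3);
  (-2, MulL x0 (AltR x1 x2 x3)); (-2, MulR (AltR x0 x1 x2) x3);
  (4, AltR (x0 * x2) x1 x3); (-4, AltR x1 (x0 * x2) x3);
  (-2, MulL x0 (AltR x2 x1 x3)); (2, MulR (AltR x0 x2 x3) x1);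
  (4, AltR (x0 * x3) x1 x2); (4, AltR x1 (x0 * x3) x2);
  (2, AltR x2 (x1 * x0) x3); (-6, MulL x1 (AltR x0 x2 x3));
  (-4, MulR (AltR x1 x0 x2) x3); (2, MulR (AltR x1 x0 x3) x2);
  (-2, AltR (x1 * x3) x0 x2); (2, AltR (x2 * x0) x1 x3);
  (-6, MulL x2 (AltR x0 x1 x3)); (2, MulR (AltR x2 x0 x3) x1);
  (-2, AltR (x2 * x1) x0 x3); (4, MulL x2 (AltR x1 x0 x3));
  (-2, AltR (x3 * x0) x1 x2); (2, AltR x1 (x3 * x0) x2)].

Definition cert_module2 : seq (int * cert) := [::
  (-1, AltL (x0 * x1) x2 x3); (-1, MulL x0 (AltL x1 x2 x3));
  (-8, MulR (AltL x0 x1 x2) x3); (-2, AltL (x0 * x1) x3 x2);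
  (-6, MulR (AltL x0 x1 x3) x2); (1, AltL x1 x3 (x0 * x2));
  (-6, MulR (AltL x0 x2 x1) x3); (1, AltL (x0 * x2) x3 x1);
  (-5, MulR (AltL x0 x2 x3) x1); (-1, AltL (x0 * x3) x1 x2);
  (-2, AltL x1 x2 (x0 * x3)); (-2, MulR (AltL x0 x3 x1) x2);
  (-3, AltL (x0 * x3) x2 x1); (1, MulR (AltL x0 x3 x2) x1);
  (1, AltL (x1 * x0) x2 x3); (-1, AltL x2 x3 (x1 * x0));
  (4, MulL x1 (AltL x0 x2 x3)); (3, MulL x1 (AltL x0 x3 x2));
  (-6, AltL (x1 * x2) x0 x3); (1, AltL x0 x3 (x1 * x2));
  (2, MulR (AltL x1 x2 x0) x3); (-2, MulL x1 (AltL x2 x3 x0));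
  (-1, MulR (AltL x1 x2 x3) x0); (-4, AltL (x1 * x3) x0 x2);
  (5, AltL x0 x2 (x1 * x3)); (-1, AltL (x1 * x3) x2 x0);
  (-1, MulR (AltL x1 x3 x2) x0); (4, AltL (x2 * x0) x1 x3);
  (3, MulL x2 (AltL x0 x1 x3)); (1, AltL (x2 * x0) x3 x1);
  (4, MulL x2 (AltL x0 x3 x1)); (-4, AltL (x2 * x1) x0 x3);
  (-1, AltL x0 x3 (x2 * x1)); (1, MulL x2 (AltL x1 x3 x0));
  (-4, AltL (x2 * x3) x0 x1); (5, AltL x0 x1 (x2 * x3));
  (1, MulR (AltL x2 x3 x0) x1); (-1, AltL (x2 * x3) x1 x0);
  (1, MulR (AltL x2 x3 x1) x0); (5, AltL (x3 * x0) x1 x2);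
  (2, AltL x1 x2 (x3 * x0)); (-1, MulL x3 (AltL x0 x1 x2));
  (3, AltL (x3 * x0) x2 x1); (1, MulL x3 (AltL x0 x2 x1));
  (4, AltL x0 x2 (x3 * x1)); (1, AltL (x3 * x1) x2 x0);
  (4, AltL x0 x1 (x3 * x2)); (-1, AltL (x3 * x2) x1 x0);
  (6, AltR (x0 * x1) x2 x3); (-4, AltR x2 (x0 * x1) x3);
  (-4, MulL x0 (AltR x1 x2 x3)); (2, MulR (AltR x0 x1 x2) x3);
  (2, MulR (AltR x0 x1 x3) x2); (4, AltR (x0 * x2) x1 x3);
  (-4, AltR x1 (x0 * x2) x3); (-4, MulL x0 (AltR x2 x1 x3));
  (2, AltR (x0 * x3) x1 x2); (-4, AltR x1 (x0 * x3) x2);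
  (4, AltR (x1 * x0) x2 x3); (-8, MulL x1 (AltR x0 x2 x3));
  (4, MulR (AltR x1 x0 x2) x3); (2, MulR (AltR x1 x0 x3) x2);
  (2, MulL x1 (AltR x2 x0 x3)); (2, AltR (x1 * x3) x0 x2);
  (2, AltR (x2 * x0) x1 x3); (2, AltR x1 (x2 * x0) x3);
  (-8, MulL x2 (AltR x0 x1 x3)); (2, MulR (AltR x2 x0 x3) x1);
  (2, AltR (x2 * x1) x0 x3); (-2, MulL x2 (AltR x1 x0 x3));
  (-4, AltR (x3 * x0) x1 x2); (-2, AltR x1 (x3 * x0) x2)].

Definition cert_module3 : seq (int * cert) := [::
  (1, AltL (x0 * x1) x2 x3); (1, AltL x2 x3 (x0 * x1));
  (-2, MulL x0 (AltL x1 x2 x3)); (-1, MulR (AltL x0 x1 x2) x3);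
  (1, AltL (x0 * x1) x3 x2); (-3, MulR (AltL x0 x1 x3) x2);
  (-3, MulR (AltL x0 x2 x1) x3); (-2, AltL (x0 * x2) x3 x1);
  (-4, MulR (AltL x0 x2 x3) x1); (-5, AltL (x0 * x3) x1 x2);
  (-7, AltL x1 x2 (x0 * x3)); (1, MulR (AltL x0 x3 x1) x2);
  (-3, AltL (x0 * x3) x2 x1); (-2, MulR (AltL x0 x3 x2) x1);
  (5, AltL (x1 * x0) x2 x3); (2, MulL x1 (AltL x0 x2 x3));
  (1, AltL (x1 * x0) x3 x2); (4, MulL x1 (AltL x0 x3 x2));
  (-3, AltL (x1 * x2) x0 x3); (-1, AltL x0 x3 (x1 * x2));
  (7, MulR (AltL x1 x2 x0) x3); (1, MulL x1 (AltL x2 x3 x0));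
  (1, MulR (AltL x1 x2 x3) x0); (-2, AltL (x1 * x3) x0 x2);
  (4, AltL x0 x2 (x1 * x3)); (1, MulR (AltL x1 x3 x0) x2);
  (1, AltL (x1 * x3) x2 x0); (1, MulR (AltL x1 x3 x2) x0);
  (2, AltL (x2 * x0) x1 x3); (-1, AltL x1 x3 (x2 * x0));
  (3, MulL x2 (AltL x0 x1 x3)); (3, MulL x2 (AltL x0 x3 x1));
  (-5, AltL (x2 * x1) x0 x3); (1, AltL x0 x3 (x2 * x1));
  (-2, MulL x2 (AltL x1 x3 x0)); (-2, AltL (x2 * x3) x0 x1);
  (4, AltL x0 x1 (x2 * x3)); (1, AltL (x2 * x3) x1 x0);
  (-1, MulR (AltL x2 x3 x1) x0); (1, AltL (x3 * x0) x1 x2);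
  (-2, AltL x1 x2 (x3 * x0)); (1, MulL x3 (AltL x0 x1 x2));
  (3, AltL (x3 * x0) x2 x1); (-1, MulL x3 (AltL x0 x2 x1));
  (2, AltL x0 x2 (x3 * x1)); (-1, AltL (x3 * x1) x2 x0);
  (2, AltL x0 x1 (x3 * x2)); (1, AltL (x3 * x2) x1 x0);
  (2, AltR (x0 * x1) x2 x3); (-4, AltR x2 (x0 * x1) x3);
  (-2, MulL x0 (AltR x1 x2 x3)); (-2, MulR (AltR x0 x1 x2) x3);
  (4, AltR (x0 * x2) x1 x3); (-4, AltR x1 (x0 * x2) x3);
  (-2, MulL x0 (AltR x2 x1 x3)); (2, MulR (AltR x0 x2 x3) x1);
  (4, AltR (x0 * x3) x1 x2); (4, AltR x1 (x0 * x3) x2);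
  (2, AltR x2 (x1 * x0) x3); (-6, MulL x1 (AltR x0 x2 x3));
  (-4, MulR (AltR x1 x0 x2) x3); (2, MulR (AltR x1 x0 x3) x2);
  (-2, AltR (x1 * x3) x0 x2); (2, AltR (x2 * x0) x1 x3);
  (-6, MulL x2 (AltR x0 x1 x3)); (2, MulR (AltR x2 x0 x3) x1);
  (-2, AltR (x2 * x1) x0 x3); (4, MulL x2 (AltR x1 x0 x3));
  (-2, AltR (x3 * x0) x1 x2); (2, AltR x1 (x3 * x0) x2)].

Section AlternativeCommutator.
Variables (D : zmodType) (mul : D -> D -> D).
Hypothesis altD : lin_alternative mul.

Local Notation "[ a , b ]" := (mul a b - mul b a).
Local Notation jac a b c := ([[a, b], c] + [[b, c], a] + [[c, a], b]).

Lemma malcev_lin_comm x w y z :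
  jac x y [w, z] + jac w y [x, z] = [jac x y z, w] + [jac w y z, x].
Proof. alt_identity altD [:: x; w; y; z] cert_malcev_lin. Qed.

Lemma comm_rep_identity x y z v :
  [[[x, y], z], v] =
  [x, [y, [z, v]]] - [z, [x, [y, v]]] + [y, [[z, x], v]] - [[y, z], [x, v]].
Proof. alt_identity altD [:: x; y; z; v] cert_rep. Qed.

Lemma comm_module_identity1 x y a b :
  [[x, y], [a, b]] =
  [x, [[y, a], b]] - [[y, [x, a]], b] - [[x, [y, b]], a] + [y, [[x, b], a]].
Proof. alt_identity altD [:: x; y; a; b] cert_module1. Qed.

Lemma comm_module_identity2 x y a b :
  [[x, a], [y, b]] =
  [[[x, y], a], b] - [x, [[y, a], b]] + [y, [x, [a, b]]] + [[y, [x, b]], a].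
Proof. alt_identity altD [:: x; y; a; b] cert_module2. Qed.

Lemma comm_module_identity3 x a b c :
  [[x, a], [b, c]] =
  [[[x, b], a], c] - [x, [[b, a], c]] - [[x, [a, c]], b] - [[[x, c], b], a].
Proof. alt_identity altD [:: x; a; b; c] cert_module3. Qed.

End AlternativeCommutator.

Section BilinearProducts.
Variable F : fieldType.
Implicit Types U W X : lmodType F.

Lemma bilinDl U W X (f : U -> W -> X) :
  bilin f -> forall x1 x2 y, f (x1 + x2) y = f x1 y + f x2 y.
Proof. by case=> fDl _ x1 x2 y; rewrite -[x1]scale1r fDl !scale1r. Qed.

Lemma bilinDr U W X (f : U -> W -> X) :
  bilin f -> forall x y1 y2, f x (y1 + y2) = f x y1 + f x y2.
Proof. by case=> _ fDr x y1 y2; rewrite -[y1]scale1r fDr !scale1r. Qed.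

Lemma bilin0l U W X (f : U -> W -> X) : bilin f -> forall y, f 0 y = 0.
Proof. by move/bilinDl=> fD y; apply: (addrI (f 0 y)); rewrite -fD !addr0. Qed.

Lemma bilin0r U W X (f : U -> W -> X) : bilin f -> forall x, f x 0 = 0.
Proof. by move/bilinDr=> fD x; apply: (addrI (f x 0)); rewrite -fD !addr0. Qed.

Lemma bilin_flip U W X (f : U -> W -> X) : bilin f -> bilin (fun y x => f x y).
Proof. by case=> fDl fDr; split=> a x y z; rewrite ?fDl ?fDr. Qed.

Lemma bilin_sub U W X (f g : U -> W -> X) :
  bilin f -> bilin g -> bilin (fun x y => f x y - g x y).
Proof.
case=> fDl fDr [gDl gDr].
by split=> a x y z; rewrite ?fDl ?gDl ?fDr ?gDr scalerBr; abel.
Qed.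

Lemma bilin_commutator U (m : U -> U -> U) : bilin m -> bilin (commutator m).
Proof. by move=> mb; apply: bilin_sub (bilin_flip mb). Qed.

Lemma alternative_lin U (m : U -> U -> U) : alternative m -> lin_alternative m.
Proof.
case=> mb [altl altr]; have mDl := bilinDl mb; have mDr := bilinDr mb.
split=> // a b c.
- have -> : associator m a b c + associator m b a c =
            assoc m (a + b) (a + b) c - assoc m a a c - assoc m b b c.
    by rewrite /associator /assoc !mDl !mDr !mDl; abel.
  by rewrite !altl !subr0.
- have -> : associator m a b c + associator m a c b =
            assoc m a (b + c) (b + c) - assoc m a b b - assoc m a c c.
    by rewrite /associator /assoc !mDr !mDl !mDr; abel.
  by rewrite !altr !subr0.
Qed.

Lemma char0_mulr2n_eq0 U (u : U) : [pchar F] =i pred0 -> u *+ 2 = 0 -> u = 0.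
Proof.
by move=> /pcharf0P F0 /eqP; rewrite -scaler_nat scaler_eq0 F0 orFb => /eqP.
Qed.

Lemma malcev_commutator U (m : U -> U -> U) :
  [pchar F] =i pred0 -> alternative m -> malcev (commutator m).
Proof.
move=> F0 altm; split; first exact: bilin_commutator altm.1.
split=> [x y|x y z]; first by rewrite /commutator opprB.
apply/subr0_eq/(char0_mulr2n_eq0 F0); rewrite mulrnBl !mulr2n; apply/eqP.
by rewrite subr_eq0; apply/eqP/(malcev_lin_comm (alternative_lin altm)).
Qed.

End BilinearProducts.

Lemma eq0_modulo (W : zmodType) (e E : W) : e = 0 -> E - e = 0 -> E = 0.
Proof. by move=> ->; rewrite subr0. Qed.

Section SplitNullExtension.
Variables (F : fieldType) (A V : lmodType F) (m : A -> A -> A) (mV : V -> V -> V).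
Variables (l r : A -> V -> V).
Hypotheses (altA : alternative m) (bimod : bimodule_alternative m mV l r).

Definition sdmul (p q : A * V) : A * V :=
  (m p.1 q.1, l p.1 q.2 + r q.1 p.2 + mV p.2 q.2).

Lemma sdmulDl : left_distributive sdmul +%R.
Proof.
have [[mVb _] [[lb [rb _]] _]] := bimod.
move=> [x1 a1] [x2 a2] [y b]; apply: injective_projections => /=.
  exact: (bilinDl altA.1).
by rewrite (bilinDl lb) (bilinDr rb) (bilinDl mVb); abel.
Qed.

Lemma sdmulDr : right_distributive sdmul +%R.
Proof.
have [[mVb _] [[lb [rb _]] _]] := bimod.
move=> [x a] [y1 b1] [y2 b2]; apply: injective_projections => /=.
  exact: (bilinDr altA.1).
by rewrite (bilinDr lb) (bilinDl rb) (bilinDr mVb); abel.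
Qed.

Lemma sdmul_altl p q s : associator sdmul p q s + associator sdmul q p s = 0.
Proof.
have [_ _ altAl _] := alternative_lin altA.
have [altV [[lb [rb [_ [R2 [_ R4]]]]] [B1 [_ [B3 _]]]]] := bimod.
have [mVb _] := altV; have [_ _ altVl _] := alternative_lin altV.
case: p q s => [x a] [y b] [z c]; rewrite /associator /sdmul.
apply: injective_projections => /=; first exact: altAl.
rewrite ?(bilinDr lb) ?(bilinDr rb) ?(bilinDl mVb) ?(bilinDr mVb).
apply: (eq0_modulo (R2 x y c)); apply: (eq0_modulo (R4 y z a)).
apply: (eq0_modulo (R4 x z b)); apply: (eq0_modulo (B1 z a b)).
apply: (eq0_modulo (B3 y a c)); apply: (eq0_modulo (B3 x b c)).
by apply: (eq0_modulo (altVl a b c)); rewrite /associator; abel.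
Qed.

Lemma sdmul_altr p q s : associator sdmul p q s + associator sdmul p s q = 0.
Proof.
have [_ _ _ altAr] := alternative_lin altA.
have [altV [[lb [rb [R1 [_ [R3 _]]]]] [_ [B2 [_ B4]]]]] := bimod.
have [mVb _] := altV; have [_ _ _ altVr] := alternative_lin altV.
case: p q s => [x a] [y b] [z c]; rewrite /associator /sdmul.
apply: injective_projections => /=; first exact: altAr.
rewrite ?(bilinDr lb) ?(bilinDr rb) ?(bilinDl mVb) ?(bilinDr mVb).
apply: (eq0_modulo (R1 y z a)); apply: (eq0_modulo (R3 x z b)).
apply: (eq0_modulo (R3 x y c)); apply: (eq0_modulo (B2 x b c)).
apply: (eq0_modulo (B4 z a b)); apply: (eq0_modulo (B4 y a c)).
by apply: (eq0_modulo (altVr a b c)); rewrite /associator; abel.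
Qed.

Lemma sdmul_lin_alternative : lin_alternative sdmul.
Proof.
by split; [exact: sdmulDl | exact: sdmulDr | exact: sdmul_altl | exact: sdmul_altr].
Qed.

Local Notation "[ p , q ]" := (sdmul p q - sdmul q p).
Local Notation rho := (fun x a => l x a - r x a).

Lemma sdmul_commAA x y : [(x, 0), (y, 0)] = (commutator m x y, 0).
Proof.
have [[mVb _] [[lb [rb _]] _]] := bimod.
apply: injective_projections => //=.
by rewrite !(bilin0r lb) !(bilin0r rb) (bilin0l mVb) !addr0 subrr.
Qed.

Lemma sdmul_commAV x a : [(x, 0), (0, a)] = (0, rho x a).
Proof.
have [[mVb _] [[lb [rb _]] _]] := bimod; have [mb _] := altA.
apply: injective_projections => /=; first by rewrite (bilin0r mb) (bilin0l mb) subrr.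
by rewrite (bilin0l lb) (bilin0l rb) (bilin0l mVb) (bilin0r mVb) !addr0 add0r.
Qed.

Lemma sdmul_commVV a b : [(0, a), (0, b)] = (0, commutator mV a b).
Proof.
have [_ [[lb [rb _]] _]] := bimod; have [mb _] := altA.
apply: injective_projections => /=; first by rewrite (bilin0l mb) subrr.
by rewrite !(bilin0l lb) !(bilin0l rb) !add0r.
Qed.

Let sdmul_comm := (sdmul_commAA, sdmul_commAV, sdmul_commVV).

Lemma rho_rep_identity x y z v :
  rho (commutator m (commutator m x y) z) v =
  rho x (rho y (rho z v)) - rho z (rho x (rho y v))
  + rho y (rho (commutator m z x) v) - rho (commutator m y z) (rho x v).
Proof.
have := comm_rep_identity sdmul_lin_alternative (x, 0) (y, 0) (z, 0) (0, v).
by rewrite !sdmul_comm => /(congr1 snd).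
Qed.

Lemma rho_module_identity1 x y a b :
  rho (commutator m x y) (commutator mV a b) =
  rho x (commutator mV (rho y a) b) - commutator mV (rho y (rho x a)) b
  - commutator mV (rho x (rho y b)) a + rho y (commutator mV (rho x b) a).
Proof.
have := comm_module_identity1 sdmul_lin_alternative (x, 0) (y, 0) (0, a) (0, b).
by rewrite !sdmul_comm => /(congr1 snd).
Qed.

Lemma rho_module_identity2 x y a b :
  commutator mV (rho x a) (rho y b) =
  commutator mV (rho (commutator m x y) a) b - rho x (commutator mV (rho y a) b)
  + rho y (rho x (commutator mV a b)) + commutator mV (rho y (rho x b)) a.
Proof.
have := comm_module_identity2 sdmul_lin_alternative (x, 0) (y, 0) (0, a) (0, b).
by rewrite !sdmul_comm => /(congr1 snd).
Qed.

Lemma rho_module_identity3 x a b c :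
  commutator mV (rho x a) (commutator mV b c) =
  commutator mV (commutator mV (rho x b) a) c
  - rho x (commutator mV (commutator mV b a) c)
  - commutator mV (rho x (commutator mV a c)) b
  - commutator mV (commutator mV (rho x c) b) a.
Proof.
have := comm_module_identity3 sdmul_lin_alternative (x, 0) (0, a) (0, b) (0, c).
by rewrite !sdmul_comm => /(congr1 snd).
Qed.

End SplitNullExtension.

Theorem proposition4p4 (F : fieldType) (A V : lmodType F)
  (m : A -> A -> A) (mV : V -> V -> V) (l r : A -> V -> V) :
  [pchar F] =i pred0 ->
  alternative m ->
  bimodule_alternative m mV l r ->
  module_malcev (commutator m) (commutator mV) (fun x v => l x v - r x v).
Proof.
move=> F0 altA bimod; have [altV [[lb [rb _]] _]] := bimod.
split; first exact: malcev_commutator.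
split; first exact: malcev_commutator altV.
split; first by split; [exact: bilin_sub | exact: rho_rep_identity altA bimod].
split; first exact: rho_module_identity1 altA bimod.
split; first exact: rho_module_identity2 altA bimod.
exact: rho_module_identity3 altA bimod.
Qed.
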